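(* Let $c$ be a correct client following the client protocol described in the context, let $w$ be a \textsc{put} operation and $r$ a \textsc{get} operation issued by $c$, with $w$ issued before $r$. Then $\mathrm{ts}(r) \ge \mathrm{ts}(w)$.
   Context: Client model. A client $c$ has a physical clock whose reading $\mathsf{clock}_c$ is a positive real number that is strictly increasing in real time. The client keeps two variables, a dependency time $\mathsf{dt}_c$ and a common global stable time $\mathsf{cgst}_c$, both initially $0$; they are modified only as described below. A correct client issues its operations one at a time: an operation is issued only after the previous one has returned. Servers are grouped into partitions of $3f+1$ replicas each, and a quorum is a set of $2f+1$ replicas of one partition. \textsc{get}$(k)$: the client sets $ts \gets \max\{\mathsf{dt}_c, \mathsf{cgst}_c\}$ and sends a request carrying $ts$ to the replicas of the partition holding $k$. It then waits for replies from a quorum $Q$, each reply from replica $i\in Q$ carrying a value $v_i$ and a number $cgst_i$, sets $\mathsf{cgst}_c \gets \max\{\mathsf{cgst}_c, \min_{i\in Q} cgst_i\}$, and returns a value. \textsc{put}$(k,v)$: the client waits until $\mathsf{clock}_c > \mathsf{cgst}_c$, then sends a request carrying $(k, v, cl, c)$, where $cl$ is the current reading of $\mathsf{clock}_c$, to the replicas of the partition holding $k$. It then waits for replies from a quorum $Q$, each reply from $i\in Q$ carrying a number $cgst_i$, sets $\mathsf{cgst}_c \gets \max\{\mathsf{cgst}_c, \min_{i\in Q} cgst_i\}$, then sets $\mathsf{dt}_c$ to the current reading of $\mathsf{clock}_c$, and returns. Timestamps: for a \textsc{get} operation $o$, $\mathrm{ts}(o)$ is the value $ts=\max\{\mathsf{dt}_c,\mathsf{cgst}_c\}$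 computed when $o$ is issued; for a \textsc{put} operation $o$, $\mathrm{ts}(o)$ is the clock value $cl$ sent in its request. *)

From Stdlib Require Import Reals List Lia Lra.
Import ListNotations.
Open Scope R_scope.

(* Client local state: dependency time dt_c and common global stable time cgst_c. *)
Record client_state := mkState { dt : R ; cgst : R }.

Definition init_state : client_state := mkState 0 0.

Definition min_list (l : list R) : R :=
  match l with
  | [] => 0
  | x :: l' => fold_left Rmin l' x
  end.

(* A key type K and value type V are kept abstract. Each operation records the
   real times of its relevant events and the cgst_i numbers carried by the
   replies of the quorum Q that answered it. *)
Inductive op (K V : Type) :=
| OGet (k : K) (t_issue t_ret : R) (replies : list (V * R))
| OPut (k : K) (v : V) (t_issue t_send t_dt t_ret : R) (replies : list R).
Arguments OGet {K V}.
Arguments OPut {K V}.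

Definition op_start {K V} (o : op K V) : R :=
  match o with OGet _ t _ _ => t | OPut _ _ t _ _ _ _ => t end.
Definition op_end {K V} (o : op K V) : R :=
  match o with OGet _ _ t _ => t | OPut _ _ _ _ _ t _ => t end.

Definition is_get {K V} (o : op K V) : Prop :=
  match o with OGet _ _ _ _ => True | _ => False end.
Definition is_put {K V} (o : op K V) : Prop :=
  match o with OPut _ _ _ _ _ _ _ => True | _ => False end.

Definition op_ts {K V} (clock : R -> R) (s : client_state) (o : op K V) : R :=
  match o with
  | OGet _ _ _ _ => Rmax (dt s) (cgst s)
  | OPut _ _ _ t_send _ _ _ => clock t_send
  end.

Definition next_state {K V} (clock : R -> R) (s : client_state) (o : op K V)
  : client_state :=
  match o with
  | OGet _ _ _ reps => mkState (dt s) (Rmax (cgst s) (min_list (map snd reps)))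
  | OPut _ _ _ _ t_dt _ reps =>
      mkState (clock t_dt) (Rmax (cgst s) (min_list reps))
  end.

Definition op_ok {K V} (clock : R -> R) (f : nat) (s : client_state)
  (o : op K V) : Prop :=
  match o with
  | OGet _ t_i t_r reps => t_i <= t_r /\ length reps = (2 * f + 1)%nat
  | OPut _ _ t_i t_s t_d t_r reps =>
      t_i <= t_s /\ t_s < t_d /\ t_d <= t_r /\
      cgst s < clock t_s /\ length reps = (2 * f + 1)%nat
  end.

Definition state_before {K V} (clock : R -> R) (ops : list (op K V)) (i : nat)
  : client_state :=
  fold_left (next_state clock) (firstn i ops) init_state.

Definition ts_at {K V} (clock : R -> R) (ops : list (op K V)) (i : nat)
    (d : op K V) : R :=
  op_ts clock (state_before clock ops i) (nth i ops d).

Definition correct_run {K V} (clock : R -> R) (f : nat) (ops : list (op K V))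
    (d : op K V) : Prop :=
  forall i, (i < length ops)%nat ->
    op_ok clock f (state_before clock ops i) (nth i ops d) /\
    ((S i < length ops)%nat -> op_end (nth i ops d) <= op_start (nth (S i) ops d)).

Definition clock_ok (clock : R -> R) : Prop :=
  (forall t, 0 < clock t) /\ (forall t1 t2, t1 < t2 -> clock t1 < clock t2).

(* A put sets dt to a clock reading taken strictly after its own timestamp was
   read. Afterwards dt never decreases: dt never exceeds the clock at the start
   of the next operation (operations are sequential and the clock increases),
   so a later put, which sets dt to a later clock reading, cannot lower it.
   Finally a get's timestamp is at least the current dt. *)

From Stdlib Require Import Reals List Lia Lra.
Open Scope R_scope.

Lemma firstn_S_nth {A} (l : list A) (k : nat) (d : A) :
  (k < length l)%nat -> firstn (S k) l = firstn k l ++ nth k l d :: nil.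
Proof.
  revert k; induction l as [|a l IH]; intros [|k] Hk; simpl in *; try lia.
  - reflexivity.
  - f_equal. apply IH. lia.
Qed.

Lemma state_before_S {K V} clock (ops : list (op K V)) k d :
  (k < length ops)%nat ->
  state_before clock ops (S k) =
  next_state clock (state_before clock ops k) (nth k ops d).
Proof.
  intros Hk. unfold state_before.
  rewrite (firstn_S_nth ops k d Hk), fold_left_app. reflexivity.
Qed.

Lemma clock_le clock t1 t2 :
  clock_ok clock -> t1 <= t2 -> clock t1 <= clock t2.
Proof.
  intros [_ Hmono] [Hlt | <-]; [left; apply Hmono; exact Hlt | right; reflexivity].
Qed.

Section OperationStep.

Context {K V : Type} (clock : R -> R) (f : nat).
Hypothesis Hclock : clock_ok clock.

Lemma op_start_le_end s (o : op K V) :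
  op_ok clock f s o -> op_start o <= op_end o.
Proof. destruct o; simpl; intros; lra. Qed.

Lemma dt_next_state_le_clock_end s (o : op K V) :
  op_ok clock f s o -> dt s <= clock (op_start o) ->
  dt (next_state clock s o) <= clock (op_end o).
Proof.
  intros Hok Hdt. pose proof (clock_le _ _ _ Hclock (op_start_le_end s o Hok)).
  destruct o; simpl in *; [lra|].
  apply clock_le; [exact Hclock | lra].
Qed.

Lemma dt_le_next_state s (o : op K V) :
  op_ok clock f s o -> dt s <= clock (op_start o) ->
  dt s <= dt (next_state clock s o).
Proof.
  destruct o; simpl; intros Hok Hdt; [lra|].
  enough (clock t_issue <= clock t_dt) by lra.
  apply clock_le; [exact Hclock | lra].
Qed.

Lemma put_ts_lt_dt_next_state s (o : op K V) :
  op_ok clock f s o -> is_put o -> op_ts clock s o < dt (next_state clock s o).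
Proof.
  destruct Hclock as [_ Hmono].
  destruct o; simpl; intros Hok Hput; [contradiction|].
  apply Hmono. lra.
Qed.

Lemma dt_le_get_ts s (o : op K V) :
  is_get o -> dt s <= op_ts clock s o.
Proof. destruct o; simpl; intros Hget; [apply Rmax_l | contradiction]. Qed.

End OperationStep.

Section CorrectRun.

Context {K V : Type} (clock : R -> R) (f : nat) (ops : list (op K V)) (d : op K V).
Hypothesis Hclock : clock_ok clock.
Hypothesis Hrun : correct_run clock f ops d.

Lemma dt_le_clock_start k :
  (k < length ops)%nat ->
  dt (state_before clock ops k) <= clock (op_start (nth k ops d)).
Proof.
  induction k as [|k IH]; intros Hk.
  - simpl. destruct Hclock as [Hpos _]. left. apply Hpos.
  - destruct (Hrun k ltac:(lia)) as [Hok Hnext].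
    rewrite (state_before_S clock ops k d ltac:(lia)).
    eapply Rle_trans.
    + apply (dt_next_state_le_clock_end clock f Hclock _ _ Hok), IH. lia.
    + apply clock_le; [exact Hclock | apply Hnext; exact Hk].
Qed.

Lemma dt_state_before_mono i j :
  (i <= j)%nat -> (j <= length ops)%nat ->
  dt (state_before clock ops i) <= dt (state_before clock ops j).
Proof.
  induction 1 as [|j Hij IH]; intros Hj; [apply Rle_refl|].
  eapply Rle_trans; [apply IH; lia|].
  rewrite (state_before_S clock ops j d ltac:(lia)).
  apply (dt_le_next_state clock f Hclock); [apply Hrun; lia|].
  apply dt_le_clock_start. lia.
Qed.

End CorrectRun.

Theorem lemma5 (K V : Type) (clock : R -> R) (f : nat) (ops : list (op K V))
  (d : op K V) :
  clock_ok clock ->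
  correct_run clock f ops d ->
  forall i j : nat, (i < j)%nat -> (j < length ops)%nat ->
  is_put (nth i ops d) -> is_get (nth j ops d) ->
  ts_at clock ops j d >= ts_at clock ops i d.
Proof.
  intros Hclock Hrun i j Hij Hj Hput Hget. unfold ts_at.
  assert (Hput_lt : op_ts clock (state_before clock ops i) (nth i ops d)
                    < dt (state_before clock ops (S i))).
  { rewrite (state_before_S clock ops i d ltac:(lia)).
    apply (put_ts_lt_dt_next_state clock f Hclock); [apply Hrun; lia | exact Hput]. }
  assert (Hmono : dt (state_before clock ops (S i)) <= dt (state_before clock ops j))
    by (apply (dt_state_before_mono clock f ops d); auto; lia).
  pose proof (dt_le_get_ts clock (state_before clock ops j) _ Hget).
  lra.
Qed.
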